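(* Let $k$ be a positive integer and suppose the graph $G$ satisfies $\tau(G)=\overline{\tau}(G)=\kappa'(G)=\overline{\kappa'}(G)=k$. Then $G=G_1*_k G_2$ where, for each $i=1,2$, either $G_i=K_1$ or $\tau(G_i)=\overline{\tau}(G_i)=\kappa'(G_i)=\overline{\kappa'}(G_i)=k$.
   Context: Graphs are finite, loopless, possibly with multiple edges. $\kappa'(G)$ is the edge connectivity; $\tau(G)$ is the maximum number of edge-disjoint spanning trees of a connected graph $G$ ($\tau(K_1)=\infty$). $\overline{\kappa'}(G)=\max\{\kappa'(H): H\subseteq G\}$ and $\overline{\tau}(G)=\max\{\tau(H): H\subseteq G\}$, maxima over subgraphs. For vertex-disjoint connected graphs $G_1,G_2$ and a set $K$ of $k$ edges each having one end in $V(G_1)$ and the other in $V(G_2)$, the $k$-edge-join $G_1*_k G_2$ is the graph with vertex set $V(G_1)\cup V(G_2)$ and edge set $E(G_1)\cup E(G_2)\cup K$. *)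

(* Finite loopless multigraphs inside an ambient finite
   multigraph: vertex type T, edge type E, endpoint maps src/tgt
   (orientation irrelevant).  A graph is a pair (A, F) with A : {set T},
   F : {set E}, every edge of F having both ends in A. *)
From mathcomp Require Import all_boot all_order.
Set Implicit Arguments. Unset Strict Implicit. Unset Printing Implicit Defensive.

Section MultiGraphs.
Variables (T E : finType) (src tgt : E -> T).

Definition is_graph (A : {set T}) (F : {set E}) : bool :=
  [forall e in F, (src e \in A) && (tgt e \in A)].

Definition adj (F : {set E}) : rel T := fun x y =>
  [exists e in F, ((src e == x) && (tgt e == y)) || ((src e == y) && (tgt e == x))].

Definition connectedG (A : {set T}) (F : {set E}) : bool :=
  [forall x in A, forall y in A, connect (adj F) x y].

(* S is (the edge set of) a spanning tree of (A, F): S ⊆ F, (A, S) connected,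
   and minimally so (deleting any edge of S disconnects), i.e. acyclic. *)
Definition spanning_tree (A : {set T}) (F S : {set E}) : bool :=
  [&& S \subset F, connectedG A S & [forall e in S, ~~ connectedG A (S :\ e)]].

Definition has_trees (A : {set T}) (F : {set E}) (t : nat) : bool :=
  [exists Ts : {ffun 'I_t -> {set E}},
     [forall i, spanning_tree A F (Ts i)] &&
     [forall i, forall j, (i != j) ==> [disjoint Ts i & Ts j]]].

(* number of edge-disjoint spanning trees, for graphs with >= 2 vertices
   (there are at most #|F| of them, each being nonempty) *)
Definition tau_nat (A : {set T}) (F : {set E}) : nat :=
  \max_(t < #|F|.+1 | has_trees A F t) t.

(* tau(G) with tau(K_1) = infinity, encoded as None *)
Definition tau (A : {set T}) (F : {set E}) : option nat :=
  if #|A| <= 1 then None else Some (tau_nat A F).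

(* edge connectivity: least number of edges whose deletion disconnects G
   (0 if G is disconnected; 0 for K_1) *)
Definition kappa' (A : {set T}) (F : {set E}) : nat :=
  \big[minn/#|F|]_(S : {set E} | (S \subset F) && ~~ connectedG A (F :\: S)) #|S|.

Definition tau_bar (A : {set T}) (F : {set E}) : nat :=
  \max_(B : {set T} | B \subset A)
    \max_(H : {set E} | [&& H \subset F, is_graph B H & 1 < #|B|]) tau_nat B H.

Definition kappa'_bar (A : {set T}) (F : {set E}) : nat :=
  \max_(B : {set T} | B \subset A)
    \max_(H : {set E} | [&& H \subset F, is_graph B H & 1 < #|B|]) kappa' B H.

Definition all_eq_k (k : nat) (A : {set T}) (F : {set E}) : Prop :=
  [/\ tau A F = Some k, tau_bar A F = k, kappa' A F = k & kappa'_bar A F = k].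

Definition edge_join (k : nat) (A : {set T}) (F : {set E})
  (A1 : {set T}) (F1 : {set E}) (A2 : {set T}) (F2 : {set E}) (K : {set E}) : Prop :=
  [/\ [/\ A = A1 :|: A2, [disjoint A1 & A2] & F = F1 :|: F2 :|: K],
      [/\ [disjoint F1 & F2], [disjoint F1 & K] & [disjoint F2 & K]],
      [/\ is_graph A1 F1, is_graph A2 F2, A1 != set0 & A2 != set0],
      connectedG A1 F1 /\ connectedG A2 F2 &
      #|K| = k /\
      {in K, forall e, ((src e \in A1) && (tgt e \in A2)) ||
                       ((src e \in A2) && (tgt e \in A1))}].

End MultiGraphs.

From Pilot Require Import Defs.
From mathcomp Require Import all_boot all_order.
Set Implicit Arguments. Unset Strict Implicit. Unset Printing Implicit Defensive.

(* Take k edge-disjoint spanning trees of G and a minimum edge cut, and let K be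
   the set of edges leaving the component A1 of one of its sides. K is a cut
   contained in the minimum one, so |K| = k. Every tree uses an edge of K, and
   k disjoint trees meeting a k-set must each use exactly one; hence each tree
   stays connected on both sides of K, and both sides carry k edge-disjoint
   spanning trees. On a nontrivial side this bounds tau and kappa' from below
   by k, while every subgraph of a side is a subgraph of G, so that
   tau_bar(G) = kappa'_bar(G) = k bounds all four parameters from above. *)

Lemma card_bigcup_disjoint (I V : finType) (U : I -> {set V}) :
  (forall i j, i != j -> [disjoint U i & U j]) -> #|\bigcup_i U i| = \sum_i #|U i|.
Proof.
move=> disjU; rewrite -sum1_card (partition_disjoint_bigcup _ _ disjU).
by apply: eq_bigr => i _; rewrite sum1_card.
Qed.

Lemma bigminn_leq_cond (I : finType) (P : pred I) (f : I -> nat) d i0 :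
  P i0 -> \big[minn/d]_(i | P i) f i <= f i0.
Proof.
move=> Pi0; rewrite unlock; have : i0 \in index_enum I by rewrite mem_index_enum.
elim: (index_enum I) => [|i r IHr] //=; rewrite inE => /predU1P[<- | i0r].
  by rewrite Pi0 geq_minl.
by case: (P i) => /=; [apply: leq_trans (geq_minr _ _) (IHr i0r) | apply: IHr].
Qed.

Section DisjointFamilies.
Variables (I V : finType) (U : I -> {set V}).
Hypothesis disjU : forall i j, i != j -> [disjoint U i & U j].

Lemma sum_card_setI_disjoint (Y : {set V}) : \sum_i #|U i :&: Y| <= #|Y|.
Proof.
rewrite -card_bigcup_disjoint => [|i j /disjU]; last exact/disjointW/subsetIl/subsetIl.
by apply/subset_leq_card/bigcupsP => i _; apply: subsetIr.
Qed.

Lemma leq_card_meet_disjoint (Y : {set V}) :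
  (forall i, U i :&: Y != set0) -> #|I| <= #|Y|.
Proof.
move=> meetY; apply: leq_trans (sum_card_setI_disjoint Y).
by rewrite -sum1_card; apply: leq_sum => i _; rewrite card_gt0.
Qed.

Lemma card_meet_disjoint_eq1 (Y : {set V}) :
  (forall i, U i :&: Y != set0) -> #|Y| <= #|I| -> forall i, #|U i :&: Y| = 1.
Proof.
move=> meetY leYI i; apply/eqP; rewrite eqn_leq card_gt0 meetY andbT leqNgt.
apply/negP => gt1; have := leq_trans (sum_card_setI_disjoint Y) leYI.
apply/negP; rewrite -ltnNge -sum1_card (bigD1 i) //= [leqRHS](bigD1 i) //=.
by rewrite -addSn leq_add //; apply: leq_sum => j _; rewrite card_gt0.
Qed.

End DisjointFamilies.

Section MultiGraphs.
Variables (T E : finType) (src tgt : E -> T).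
Implicit Types (A B : {set T}) (F H S Tr : {set E}) (x y : T) (f : E).

Local Notation adj := (adj src tgt).
Local Notation is_graph := (is_graph src tgt).
Local Notation connectedG := (connectedG src tgt).
Local Notation spanning_tree := (spanning_tree src tgt).
Local Notation has_trees := (has_trees src tgt).
Local Notation tau_nat := (tau_nat src tgt).
Local Notation kappa' := (kappa' src tgt).

Definition induced (F : {set E}) (B : {set T}) : {set E} :=
  [set f in F | (src f \in B) && (tgt f \in B)].

Definition crossing (F : {set E}) (B : {set T}) : {set E} :=
  [set f in F | (src f \in B) != (tgt f \in B)].

Lemma is_graphP A F :
  reflect {in F, forall f, (src f \in A) && (tgt f \in A)} (is_graph A F).
Proof. exact: forall_inP. Qed.

Lemma connectedGP A F :
  reflect {in A &, forall x y, connect (adj F) x y} (connectedG A F).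
Proof.
apply: (iffP forall_inP) => [conn x y xA yA | conn x xA].
  exact: (forall_inP (conn x xA)).
by apply/forall_inP => y; apply: conn.
Qed.

Lemma has_treesP A F t :
  reflect (exists Ts : 'I_t -> {set E}, (forall i, spanning_tree A F (Ts i)) /\
             forall i j, i != j -> [disjoint Ts i & Ts j])
          (has_trees A F t).
Proof.
apply: (iffP existsP) => [[Ts /andP[/forallP trees /forallP disj]] | [Ts [trees disj]]].
  by exists Ts; split=> // i j; apply/implyP/(forallP (disj i)).
exists [ffun i => Ts i]; apply/andP; split; apply/forallP => i; rewrite ffunE //.
by apply/forallP => j; apply/implyP; rewrite ffunE; apply: disj.
Qed.

Lemma adj_sym F : symmetric (adj F).
Proof.
by move=> x y; apply/existsP/existsP => -[e /andP[eF xy]]; exists e; rewrite eF orbC.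
Qed.

Lemma adj_edge F f : f \in F -> adj F (src f) (tgt f).
Proof. by move=> fF; apply/existsP; exists f; rewrite fF !eqxx. Qed.

Lemma connect_adjS F (F' : {set E}) x y :
  F \subset F' -> connect (adj F) x y -> connect (adj F') x y.
Proof.
move=> sFF'; apply: connect_sub => u v /existsP[e /andP[eF uv]].
by apply/connect1/existsP; exists e; rewrite (subsetP sFF').
Qed.

Lemma connectedGS A F (F' : {set E}) : F \subset F' -> connectedG A F -> connectedG A F'.
Proof.
by move=> sFF' /connectedGP conn; apply/connectedGP => x y xA yA; apply/connect_adjS/conn.
Qed.

Lemma connectedG_neq0 A F : 1 < #|A| -> connectedG A F -> F != set0.
Proof.
move=> /card_gt1P[x [y [xA yA neq_xy]]] /connectedGP/(_ x y xA yA).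
apply: contraTneq => -> {F}; apply/negP => /connectP[[|z p] /= + eq_yx].
  by rewrite eq_yx eqxx in neq_xy.
by case/andP => /existsP[e]; rewrite inE.
Qed.

Lemma exists_spanning_tree A S : connectedG A S -> exists Tr, spanning_tree A S Tr.
Proof.
have [n] := ubnP #|S|; elim: n S => // n IHn S /ltnSE leSn connS.
have [minS | ] := boolP [forall e in S, ~~ connectedG A (S :\ e)].
  by exists S; rewrite /Defs.spanning_tree subxx connS minS.
rewrite negb_forall_in => /exists_inP[e eS /negPn connSe].
have [|Tr /and3P[sTr connTr minTr]] := IHn (S :\ e) _ connSe.
  by apply: leq_trans leSn; rewrite (cardsD1 e S) eS.
exists Tr; apply/and3P; split=> //; exact: subset_trans sTr (subD1set S e).
Qed.

Lemma spanning_treeS A F (F' : {set E}) Tr :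
  F \subset F' -> spanning_tree A F Tr -> spanning_tree A F' Tr.
Proof. by move=> sFF' /and3P[sTr connTr minTr]; apply/and3P; rewrite (subset_trans sTr). Qed.

Lemma spanning_tree_sub A F Tr : spanning_tree A F Tr -> Tr \subset F.
Proof. by case/and3P. Qed.

Lemma induced_sub F B : induced F B \subset F.
Proof. by apply/subsetP => f; rewrite inE => /andP[]. Qed.

Lemma inducedS F H B : F \subset H -> induced F B \subset induced H B.
Proof. by move=> sFH; apply/subsetP => f; rewrite !inE => /andP[/(subsetP sFH) -> ->]. Qed.

Lemma induced_is_graph F B : is_graph B (induced F B).
Proof. by apply/is_graphP => f; rewrite inE => /andP[]. Qed.

Lemma crossingI F Tr B : Tr \subset F -> crossing Tr B = Tr :&: crossing F B.
Proof.
by move=> sTrF; apply/setP => f; rewrite !inE; case fTr: (f \in Tr); rewrite ?(subsetP sTrF _ fTr).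
Qed.

Lemma connect_crossing_free F B x y :
  {in F, forall f, (src f \in B) = (tgt f \in B)} ->
  connect (adj F) x y -> (x \in B) = (y \in B).
Proof.
move=> noncross; apply: closed_connect => u v /existsP[e /andP[eF /orP[]]];
  by case/andP=> /eqP <- /eqP <-; rewrite noncross.
Qed.

Lemma crossing_cut A F B x y :
  x \in A -> x \in B -> y \in A -> y \notin B -> ~~ connectedG A (F :\: crossing F B).
Proof.
move=> xA xB yA yNB.
apply/negP => /connectedGP/(_ x y xA yA) conn.
suff: (x \in B) = (y \in B) by rewrite xB (negbTE yNB).
apply: connect_crossing_free conn => f /setDP[fF fNK]; apply/eqP.
by apply: contraNT fNK => cross_f; rewrite inE fF cross_f.
Qed.

Lemma crossing_component_sub A F S x : is_graph A F ->
  crossing F [set z in A | connect (adj (F :\: S)) x z] \subset S.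
Proof.
move=> /is_graphP gAF; apply/subsetP => f; rewrite inE => /andP[fF]; apply: contraR => fNS.
have /andP[sA tA] := gAF f fF.
have e : adj (F :\: S) (src f) (tgt f) by apply: adj_edge; rewrite inE fNS.
rewrite !inE sA tA /=; apply/eqP; apply/idP/idP => reach.
  exact: connect_trans reach (connect1 e).
by apply: connect_trans reach (connect1 _); rewrite adj_sym.
Qed.

Lemma crossing_setDl A F B : is_graph A F -> crossing F (A :\: B) = crossing F B.
Proof.
move=> /is_graphP gAF; apply/setP => f; rewrite !inE.
case fF: (f \in F) => //=; case/andP: (gAF f fF) => -> ->.
by case: (src f \in B); case: (tgt f \in B).
Qed.

Lemma connectedG_induced_port A B Tr a : B \subset A -> a \in B -> connectedG A Tr ->
  {in crossing Tr B, forall f, (src f == a) || (tgt f == a)} ->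
  connectedG B (induced Tr B).
Proof.
move=> sBA aB /connectedGP connTr port.
(* a path of Tr from B to a can only leave B through a, so it stays in B *)
have to_a u : u \in B -> connect (adj (induced Tr B)) u a.
  move=> uB; have /connectP[p] := connTr u a (subsetP sBA u uB) (subsetP sBA a aB).
  elim: p u uB => [|w p IHp] u uB /=; first by move=> _ ->.
  case/andP=> /existsP[f /andP[fTr uw]] pathp lastp.
  have [wB | wNB] := boolP (w \in B).
    apply: connect_trans (IHp w wB pathp lastp); apply/connect1/existsP; exists f.
    by rewrite inE fTr uw andbT; case/orP: uw => /andP[/eqP-> /eqP->]; rewrite uB wB.
  have fK : f \in crossing Tr B.
    by rewrite inE fTr; case/orP: uw => /andP[/eqP-> /eqP->]; rewrite uB (negbTE wNB).
  have : (u == a) || (w == a).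
    by have := port f fK; case/orP: uw => /andP[/eqP-> /eqP->] //; rewrite orbC.
  case/orP=> /eqP eq_a; first by rewrite eq_a connect0.
  by rewrite eq_a aB in wNB.
apply/connectedGP => x y xB yB; apply: connect_trans (to_a x xB) _.
by rewrite (sym_connect_sym (adj_sym _)) to_a.
Qed.

Lemma connectedG_induced_crossing1 A B Tr : B \subset A -> connectedG A Tr ->
  #|crossing Tr B| = 1 -> connectedG B (induced Tr B).
Proof.
move=> sBA connTr /eqP/cards1P[e eK].
have: e \in crossing Tr B by rewrite eK set11.
rewrite inE => /andP[eTr cross_e].
pose a := if src e \in B then src e else tgt e.
apply: (@connectedG_induced_port _ _ _ a sBA _ connTr).
  by rewrite /a; case: ifP => // sNB; move: cross_e; rewrite sNB; case: (tgt e \in B).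
by move=> f; rewrite eK => /set1P ->; rewrite /a; case: ifP; rewrite eqxx ?orbT.
Qed.

Lemma has_trees_induced A F B t (Ts : 'I_t -> {set E}) : B \subset A ->
  (forall i, spanning_tree A F (Ts i)) -> (forall i j, i != j -> [disjoint Ts i & Ts j]) ->
  (forall i, #|Ts i :&: crossing F B| = 1) -> has_trees B (induced F B) t.
Proof.
move=> sBA trees disj cross1.
have /fin_all_exists[Us treeUs] i : exists U, spanning_tree B (induced (Ts i) B) U.
  have /and3P[sTF connT _] := trees i.
  apply/exists_spanning_tree/(connectedG_induced_crossing1 sBA connT).
  by rewrite (crossingI _ sTF).
have sUT i : Us i \subset Ts i.
  exact: subset_trans (spanning_tree_sub (treeUs i)) (induced_sub _ _).
apply/has_treesP; exists Us; split => [i | i j /disj]; last exact: disjointW.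
exact: spanning_treeS (inducedS _ (spanning_tree_sub (trees i))) (treeUs i).
Qed.

Lemma has_trees_connectedG A F t : 0 < t -> has_trees A F t -> connectedG A F.
Proof.
move=> t_gt0 /has_treesP[Ts [trees _]].
by have /and3P[sTF connT _] := trees (Ordinal t_gt0); apply: connectedGS connT.
Qed.

Lemma crossing_sub F B : crossing F B \subset F.
Proof. by apply/subsetP => f; rewrite inE => /andP[]. Qed.

Lemma connectedGPn A F :
  reflect (exists x y, [/\ x \in A, y \in A & ~~ connect (adj F) x y]) (~~ connectedG A F).
Proof.
rewrite negb_forall_in; apply: (iffP exists_inP) => [[x xA] | [x [y [xA yA nxy]]]].
  by rewrite negb_forall_in => /exists_inP[y yA nxy]; exists x, y.
by exists x => //; rewrite negb_forall_in; apply/exists_inP; exists y.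
Qed.

Lemma spanning_tree_meets_cut A F S Tr :
  spanning_tree A F Tr -> ~~ connectedG A (F :\: S) -> Tr :&: S != set0.
Proof.
case/and3P=> sTF connT _; apply: contra => TS0; apply: connectedGS connT.
by rewrite subsetD sTF -setI_eq0.
Qed.

Lemma has_trees_leq_card A F t : 1 < #|A| -> has_trees A F t -> t <= #|F|.
Proof.
move=> A_gt1 /has_treesP[Ts [trees disj]].
have := leq_card_meet_disjoint disj (Y := F); rewrite card_ord; apply=> i.
by have /and3P[sTF connT _] := trees i; rewrite (setIidPl sTF) (connectedG_neq0 A_gt1).
Qed.

Lemma tau_nat_has_trees A F : has_trees A F (tau_nat A F).
Proof.
apply: (big_ind (has_trees A F)) => // [|t u]; last by rewrite /maxn; case: ifP.
by apply/has_treesP; exists (fun=> set0); split=> -[].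
Qed.

Lemma has_trees_leq_tau_nat A F t : 1 < #|A| -> has_trees A F t -> t <= tau_nat A F.
Proof.
move=> A_gt1 trees; have t_lt : t < #|F|.+1 by rewrite ltnS (has_trees_leq_card A_gt1 trees).
exact: (@leq_bigmax_cond _ _ (fun t : 'I_#|F|.+1 => nat_of_ord t) (Ordinal t_lt) trees).
Qed.

Lemma kappa'_leq_cut A F S :
  S \subset F -> ~~ connectedG A (F :\: S) -> kappa' A F <= #|S|.
Proof. by move=> sSF cutS; apply: bigminn_leq_cond; rewrite sSF. Qed.

Lemma exists_min_cut A F : 1 < #|A| ->
  exists S, [/\ S \subset F, ~~ connectedG A (F :\: S) & #|S| = kappa' A F].
Proof.
move=> A_gt1.
apply: (big_ind (fun n => exists S, [/\ S \subset F, ~~ connectedG A (F :\: S) & #|S| = n])).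
- by exists F; rewrite subxx setDv; split=> //; apply/negP => /(connectedG_neq0 A_gt1)/eqP.
- by move=> m n Hm Hn; rewrite /minn; case: ifP.
- by move=> S /andP[sSF cutS]; exists S.
Qed.

Lemma has_trees_leq_kappa' A F t : 1 < #|A| -> has_trees A F t -> t <= kappa' A F.
Proof.
move=> A_gt1 trees; have leFt := has_trees_leq_card A_gt1 trees.
case/has_treesP: trees => Ts [trees disj].
apply: (big_ind (fun n => t <= n)) => // [m n|S /andP[_ cutS]]; first by rewrite leq_min => ->.
have := leq_card_meet_disjoint disj (Y := S); rewrite card_ord; apply=> i.
exact: spanning_tree_meets_cut (trees i) cutS.
Qed.

(* tau_bar and kappa'_bar are subgraph_max tau_nat and subgraph_max kappa'. *)
Definition subgraph_max (p : {set T} -> {set E} -> nat) A F : nat :=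
  \max_(B : {set T} | B \subset A)
    \max_(H : {set E} | [&& H \subset F, is_graph B H & 1 < #|B|]) p B H.

Lemma leq_subgraph_max p A F B H : B \subset A -> H \subset F ->
  is_graph B H -> 1 < #|B| -> p B H <= subgraph_max p A F.
Proof.
move=> sBA sHF gBH B_gt1; apply: leq_trans (leq_bigmax_cond _ sBA).
by apply: leq_bigmax_cond; rewrite sHF gBH B_gt1.
Qed.

Lemma subgraph_maxS p A F B H : B \subset A -> H \subset F ->
  subgraph_max p B H <= subgraph_max p A F.
Proof.
move=> sBA sHF; apply/bigmax_leqP => B' sB'B; apply/bigmax_leqP => H' /and3P[sH'H gH' B'_gt1].
by apply: leq_subgraph_max; rewrite ?(subset_trans sB'B) ?(subset_trans sH'H).
Qed.

Lemma all_eq_k_subgraph k A F B H :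
  tau_bar src tgt A F = k -> kappa'_bar src tgt A F = k ->
  B \subset A -> H \subset F -> is_graph B H -> 1 < #|B| -> has_trees B H k ->
  all_eq_k src tgt k B H.
Proof.
move=> tau_barAF kappa'_barAF sBA sHF gBH B_gt1 treesBH.
have tauBH : tau_nat B H = k.
  apply/eqP; rewrite eqn_leq has_trees_leq_tau_nat // andbT -tau_barAF.
  exact: (leq_subgraph_max tau_nat).
have kappa'BH : kappa' B H = k.
  apply/eqP; rewrite eqn_leq has_trees_leq_kappa' // andbT -kappa'_barAF.
  exact: (leq_subgraph_max kappa').
split; first by rewrite /Defs.tau leqNgt B_gt1 tauBH.
- apply/eqP; rewrite eqn_leq; apply/andP; split.
    by rewrite -tau_barAF; apply: (subgraph_maxS tau_nat).
  by rewrite -{1}tauBH; apply: (leq_subgraph_max tau_nat).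
- exact: kappa'BH.
- apply/eqP; rewrite eqn_leq; apply/andP; split.
    by rewrite -kappa'_barAF; apply: (subgraph_maxS kappa').
  by rewrite -{1}kappa'BH; apply: (leq_subgraph_max kappa').
Qed.

Lemma induced_side k A F B (Ts : 'I_k -> {set E}) : 0 < k ->
  tau_bar src tgt A F = k -> kappa'_bar src tgt A F = k -> B \subset A ->
  (forall i, spanning_tree A F (Ts i)) -> (forall i j, i != j -> [disjoint Ts i & Ts j]) ->
  (forall i, #|Ts i :&: crossing F B| = 1) ->
  connectedG B (induced F B) /\ (1 < #|B| -> all_eq_k src tgt k B (induced F B)).
Proof.
move=> k_gt0 tau_barAF kappa'_barAF sBA trees disj crossB1.
have treesB := has_trees_induced sBA trees disj crossB1.
split=> [|B_gt1]; first exact: has_trees_connectedG k_gt0 treesB.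
exact: all_eq_k_subgraph tau_barAF kappa'_barAF sBA (induced_sub _ _) (induced_is_graph _ _)
  B_gt1 treesB.
Qed.

Lemma edge_join_crossing k A F B : is_graph A F -> B \subset A ->
  B != set0 -> A :\: B != set0 ->
  connectedG B (induced F B) -> connectedG (A :\: B) (induced F (A :\: B)) ->
  #|crossing F B| = k ->
  edge_join src tgt k A F B (induced F B) (A :\: B) (induced F (A :\: B)) (crossing F B).
Proof.
move=> /is_graphP gAF sBA B_neq0 AB_neq0 connB connAB cardK.
split; rewrite ?induced_is_graph //.
- split; first by rewrite -{1}(setID A B) (setIidPr sBA).
    by rewrite -setI_eq0; apply/eqP/setP => z; rewrite !inE; case: (z \in B); rewrite ?andbF.
  apply/setP => f; rewrite !inE; case fF: (f \in F) => //=.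
  by case/andP: (gAF f fF) => -> ->; case: (src f \in B); case: (tgt f \in B).
- by split; rewrite -setI_eq0; apply/eqP/setP => f; rewrite !inE;
    case: (f \in F); case: (src f \in B); case: (tgt f \in B); rewrite ?andbF.
- split=> // f; rewrite inE => /andP[fF].
  by case/andP: (gAF f fF) => sA tA; rewrite !inE sA tA; case: (src f \in B); case: (tgt f \in B).
Qed.

Lemma induced_trivial_or_all_eq_k k F B : (forall f, src f != tgt f) -> B != set0 ->
  (1 < #|B| -> all_eq_k src tgt k B (induced F B)) ->
  (#|B| = 1 /\ induced F B = set0) \/ all_eq_k src tgt k B (induced F B).
Proof.
move=> loopless B_neq0 all_eqB.
case: (leqP #|B| 1) => [/card_le1_eqP B_le1 | /all_eqB]; last by right.
left; split; first by apply/eqP; rewrite eqn_leq card_gt0 B_neq0 andbT; apply/card_le1_eqP.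
apply/setP => f; rewrite !inE; apply/negbTE/negP => /and3P[_ sB tB].
by have := loopless f; rewrite (B_le1 _ _ sB tB) eqxx.
Qed.

End MultiGraphs.

Theorem lemma3p7 (T E : finType) (src tgt : E -> T)
  (loopless : forall e : E, src e != tgt e)
  (A : {set T}) (F : {set E}) (k : nat) :
  0 < k -> is_graph src tgt A F -> all_eq_k src tgt k A F ->
  exists (A1 A2 : {set T}) (F1 F2 K : {set E}),
    [/\ edge_join src tgt k A F A1 F1 A2 F2 K,
        (#|A1| = 1 /\ F1 = set0) \/ all_eq_k src tgt k A1 F1 &
        (#|A2| = 1 /\ F2 = set0) \/ all_eq_k src tgt k A2 F2].
Proof.
move=> k_gt0 gAF [tauAF tau_barAF kappa'AF kappa'_barAF].
have [A_gt1 tau_natAF] : 1 < #|A| /\ tau_nat src tgt A F = k.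
  by move: tauAF; rewrite /tau; case: leqP => // ? [].
have := tau_nat_has_trees src tgt A F; rewrite tau_natAF => /has_treesP[Ts [trees disj]].
have [S [_ /connectedGPn[x [y [xA yA nxy]]] cardS]] := exists_min_cut src tgt F A_gt1.
pose A1 := [set z in A | connect (adj src tgt (F :\: S)) x z].
pose K := crossing src tgt F A1.
have sA1A : A1 \subset A by apply/subsetP => z; rewrite inE => /andP[].
have xA1 : x \in A1 by rewrite inE xA connect0.
have yNA1 : y \notin A1 by rewrite inE yA.
have cutK : ~~ connectedG src tgt A (F :\: K) := crossing_cut src tgt F xA xA1 yA yNA1.
have cardK : #|K| = k.
  apply/eqP; rewrite eqn_leq -{1}kappa'AF -cardS -kappa'AF kappa'_leq_cut ?crossing_sub // andbT.
  exact/subset_leq_card/crossing_component_sub.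
have crossA1 : forall i, #|Ts i :&: K| = 1.
  apply: (card_meet_disjoint_eq1 disj) => [i | ]; last by rewrite card_ord cardK.
  exact: spanning_tree_meets_cut (trees i) cutK.
have crossA2 i : #|Ts i :&: crossing src tgt F (A :\: A1)| = 1.
  by rewrite crossing_setDl.
have [connA1 all_eqA1] := induced_side k_gt0 tau_barAF kappa'_barAF sA1A trees disj crossA1.
have [connA2 all_eqA2] :=
  induced_side k_gt0 tau_barAF kappa'_barAF (subsetDl A A1) trees disj crossA2.
have A1_neq0 : A1 != set0 by apply/set0Pn; exists x.
have A2_neq0 : A :\: A1 != set0 by apply/set0Pn; exists y; rewrite inE yNA1.
exists A1, (A :\: A1), (induced src tgt F A1), (induced src tgt F (A :\: A1)), K.
by split; [apply: edge_join_crossing | apply: induced_trivial_or_all_eq_k ..].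
Qed.
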